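(* Let $X$ be a non-empty set, $(Y,\langle\cdot,\cdot\rangle)$ a real inner product space, and let $I:X\to\mathbb{R}$, $\Phi:X\to Y$ be such that (i) $\sup_X I<+\infty$; (ii) $\inf_{z\in\Phi(X)}\langle z,y\rangle=-\infty$ for all $y\in\Phi(X)\setminus\{0\}$. Then, for each $\mu>0$, at least one of the following assertions holds: (a) for each filtering cover $\mathcal{N}$ of $X$ there exists $A\in\mathcal{N}$ such that $$\sup_{\lambda\in Y}\inf_{x\in A}\big(I(x)+\mu(2\langle\Phi(x),\lambda\rangle-\|\lambda\|^2)\big)<\inf_{x\in A}\sup_{\lambda\in\Phi(A)}\big(I(x)+\mu(2\langle\Phi(x),\lambda\rangle-\|\lambda\|^2)\big);$$ (b) the set of all global minima in $X$ of the function $x\mapsto I(x)+\mu\|\Phi(x)\|^2$ is contained in $\Phi^{-1}(0)$.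
   Context: A family $\mathcal{N}$ of non-empty subsets of $X$ is a filtering cover of $X$ if $\bigcup_{A\in\mathcal{N}}A=X$ and for each $A_1,A_2\in\mathcal{N}$ there is $A_3\in\mathcal{N}$ with $A_1\cup A_2\subseteq A_3$. *)

From HB Require Import structures.
From mathcomp Require Import all_boot all_order all_algebra.
From mathcomp Require Import all_classical all_reals.
From mathcomp Require Import ereal.
Set Implicit Arguments. Unset Strict Implicit. Unset Printing Implicit Defensive.
Import Order.TTheory GRing.Theory Num.Theory.
Local Open Scope classical_set_scope.
Local Open Scope ring_scope.

Record is_inner_product (R : realType) (Y : lmodType R) (ip : Y -> Y -> R) : Prop := {
  ip_sym : forall x y, ip x y = ip y x;
  ip_linD : forall x y z, ip (x + y) z = ip x z + ip y z;
  ip_linZ : forall (a : R) x y, ip (a *: x) y = a * ip x y;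
  ip_ge0 : forall x, 0 <= ip x x;
  ip_eq0 : forall x, ip x x = 0 -> x = 0
}.

Definition ip_norm (R : realType) (Y : lmodType R) (ip : Y -> Y -> R) (y : Y) : R :=
  Num.sqrt (ip y y).

Definition filtering_cover (X : Type) (N : set (set X)) : Prop :=
  (forall A, N A -> A !=set0) /\
  (\bigcup_(A in N) A = [set: X]) /\
  (forall A1 A2, N A1 -> N A2 -> exists2 A3, N A3 & A1 `|` A2 `<=` A3).

From HB Require Import structures.
From mathcomp Require Import all_boot all_order all_algebra.
From mathcomp Require Import all_classical all_reals.
From mathcomp Require Import ereal.
From mathcomp Require Import ring lra.
Set Implicit Arguments. Unset Strict Implicit. Unset Printing Implicit Defensive.
Import Order.TTheory GRing.Theory Num.Theory.
Local Open Scope classical_set_scope.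
Local Open Scope ring_scope.

(* Suppose a global minimiser x0 of J := I + mu |Phi|^2 has a := Phi x0 <> 0.
   The Lagrangian is L(x, l) = J x - mu |Phi x - l|^2, so L(x, Phi x) = J x and
   the inf-sup over any A is at least min J = J x0.  By (i) and (ii) there is
   x1 with L(x1, a) < J x0; for a suitable t in (0, 1] the combination
   (1 - t) L(x0, .) + t L(x1, .) stays below a constant c < J x0, uniformly in
   l.  Hence on a member A of the cover containing x0 and x1 the sup-inf is at
   most c, which gives (a). *)

Lemma convex_comb_le_or (R : realDomainType) (t f g c : R) :
  0 < t -> t <= 1 -> (1 - t) * f + t * g <= c -> f <= c \/ g <= c.
Proof.
move=> t_gt0 t_le1 comb_le.
case: (lerP f c) => [|c_lt_f]; [by left | right].
rewrite -(ler_pM2l t_gt0).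
have : 0 <= (1 - t) * (f - c) by rewrite mulr_ge0 // subr_ge0 // ltW.
lra.
Qed.

Section InnerProduct.
Variables (R : realType) (Y : lmodType R) (ip : Y -> Y -> R).
Hypothesis hip : is_inner_product ip.

Lemma ipNl x y : ip (- x) y = - ip x y.
Proof. by rewrite -scaleN1r (ip_linZ hip) mulN1r. Qed.

Lemma ipBl x y z : ip (x - y) z = ip x z - ip y z.
Proof. by rewrite (ip_linD hip) ipNl. Qed.

Lemma ipDr x y z : ip x (y + z) = ip x y + ip x z.
Proof. by rewrite ip_sym // (ip_linD hip) !(ip_sym hip _ x). Qed.

Lemma ipBr x y z : ip x (y - z) = ip x y - ip x z.
Proof. by rewrite ip_sym // ipBl !(ip_sym hip _ x). Qed.

Lemma ipZr (a : R) x y : ip x (a *: y) = a * ip x y.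
Proof. by rewrite ip_sym // (ip_linZ hip) (ip_sym hip y). Qed.

Lemma ip_norm_sqr y : ip_norm ip y ^+ 2 = ip y y.
Proof. by rewrite sqr_sqrtr // ip_ge0. Qed.

Lemma ip_sub_sqr u v : ip (u - v) (u - v) = ip u u - 2 * ip u v + ip v v.
Proof. by rewrite !ipBl !ipBr (ip_sym hip v u); ring. Qed.

Lemma ip_sub_sqrC u v : ip (u - v) (u - v) = ip (v - u) (v - u).
Proof. by rewrite !ip_sub_sqr (ip_sym hip v u); ring. Qed.

(* The identity behind this bound is the variance decomposition around the
   barycentre (1 - t) a + t b. *)
Lemma ip_convex_comb_ge (t : R) a b l :
  t * (1 - t) * ip (a - b) (a - b) <=
  (1 - t) * ip (a - l) (a - l) + t * ip (b - l) (b - l).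
Proof.
set c := (1 - t) *: a + t *: b.
suff -> : (1 - t) * ip (a - l) (a - l) + t * ip (b - l) (b - l) =
          ip (l - c) (l - c) + t * (1 - t) * ip (a - b) (a - b).
  by rewrite lerDr ip_ge0.
rewrite /c !ip_sub_sqr !(ip_linD hip) !ipDr !(ip_linZ hip) !ipZr.
by rewrite (ip_sym hip b a) (ip_sym hip l a) (ip_sym hip l b); ring.
Qed.

End InnerProduct.

Section Lagrangian.
Variables (R : realType) (Y : lmodType R) (ip : Y -> Y -> R).
Hypothesis hip : is_inner_product ip.
Variables (X : Type) (I : X -> R) (Phi : X -> Y) (mu : R).
Hypothesis mu_gt0 : 0 < mu.

Definition lagrangian x l := I x + mu * (2 * ip (Phi x) l - ip l l).

Definition penalized x := I x + mu * ip (Phi x) (Phi x).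

Lemma lagrangian_diag x : lagrangian x (Phi x) = penalized x.
Proof. by rewrite /lagrangian /penalized; ring. Qed.

Lemma lagrangianE x l :
  lagrangian x l = penalized x - mu * ip (Phi x - l) (Phi x - l).
Proof. by rewrite /lagrangian /penalized ip_sub_sqr //; ring. Qed.

Lemma lagrangian_convex_comb_le t x0 x1 l :
  (1 - t) * lagrangian x0 l + t * lagrangian x1 l <=
  (1 - t) * penalized x0 + t * penalized x1
    - mu * (t * (1 - t) * ip (Phi x0 - Phi x1) (Phi x0 - Phi x1)).
Proof.
rewrite !lagrangianE.
have := ip_convex_comb_ge hip t (Phi x0) (Phi x1) l.
move/(ler_wpM2l (ltW mu_gt0)); lra.
Qed.

Lemma exists_lagrangian_lt a m S :
  (forall x, I x <= S) ->
  ereal_inf [set (ip z a)%:E | z in Phi @` [set: X]] = -oo%E ->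
  exists x1, lagrangian x1 a < m.
Proof.
move=> I_le inf_Ny.
(* r is the threshold at which S + mu * (2 * r - ip a a) reaches m. *)
pose r := (m - S + mu * ip a a) / (2 * mu).
have : (ereal_inf [set (ip z a)%:E | z in Phi @` [set: X]] < r%:E)%E.
  by rewrite inf_Ny ltNyr.
move=> /ereal_inf_lt[_ [_ [x1 _ <-] <-]]; rewrite lte_fin => x1_lt; exists x1.
have : 2 * mu * ip (Phi x1) a < 2 * mu * r by rewrite ltr_pM2l // mulr_gt0.
rewrite [2 * mu * r]mulrC divfK ?mulf_neq0 ?gt_eqF //.
by have := I_le x1; rewrite /lagrangian; lra.
Qed.

Lemma lagrangian_min_gap x0 x1 :
  lagrangian x1 (Phi x0) < penalized x0 ->
  exists2 c, c < penalized x0 &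
    forall l, lagrangian x0 l <= c \/ lagrangian x1 l <= c.
Proof.
set K := penalized x0 - lagrangian x1 (Phi x0).
set D := ip (Phi x0 - Phi x1) (Phi x0 - Phi x1).
rewrite -subr_gt0 -/K => K_gt0.
have muD_ge0 : 0 <= mu * D by rewrite mulr_ge0 ?(ip_ge0 hip) // ltW.
have KD_gt0 : 0 < K + mu * D by rewrite ltr_wpDr.
(* This t makes the right-hand side of lagrangian_convex_comb_le equal to
   penalized x0 - t ^+ 2 * K. *)
set t := K / (K + mu * D).
have t_gt0 : 0 < t by rewrite divr_gt0.
have t_le1 : t <= 1 by rewrite ler_pdivrMr // mul1r lerDl.
have tmuD : t * (mu * D) = K - t * K.
  have : t * (K + mu * D) = K by rewrite divfK // lt0r_neq0.
  lra.
have K_pen : K = penalized x0 - (penalized x1 - mu * D).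
  by rewrite /K lagrangianE // ip_sub_sqrC.
exists (penalized x0 - t ^+ 2 * K).
  by rewrite gtrBl mulr_gt0 // exprn_gt0.
move=> l; apply: (convex_comb_le_or t_gt0 t_le1).
apply: (le_trans (lagrangian_convex_comb_le t x0 x1 l)); rewrite -/D.
have -> : (1 - t) * penalized x0 + t * penalized x1 - mu * (t * (1 - t) * D) =
          penalized x0 - t * K + t * (t * (mu * D)) by rewrite K_pen; ring.
by rewrite tmuD; lra.
Qed.

End Lagrangian.

Lemma ereal_sup_lty_ub (R : realType) (T : Type) (f : T -> R) :
  (ereal_sup [set (f x)%:E | x in [set: T]] < +oo)%E ->
  exists S, forall x, f x <= S.
Proof.
have ub x : ((f x)%:E <= ereal_sup [set (f x)%:E | x in [set: T]])%E.
  by apply: ereal_sup_ubound; exists x.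
case: (ereal_sup _) ub => [S | | ] ub // _.
  by exists S => x; rewrite -lee_fin.
by exists 0 => x; have := ub x; rewrite leeNy_eq.
Qed.

Lemma ereal_sup_inf_le (R : realType) (T U : Type) (f : T -> U -> R)
    (A : set T) (c : R) :
  (forall u, exists2 x, A x & f x u <= c) ->
  (ereal_sup [set ereal_inf [set (f x u)%:E | x in A] | u in [set: U]]
   <= c%:E)%E.
Proof.
move=> h; apply: ge_ereal_sup => _ [u _ <-].
have [x Ax fx_le] := h u.
apply: (@le_trans _ _ (f x u)%:E); last by rewrite lee_fin.
by apply: ereal_inf_lbound; exists x.
Qed.

Lemma ereal_inf_sup_ge (R : realType) (T U : Type) (f : T -> U -> R)
    (g : T -> U) (A : set T) (c : R) :
  (forall x, A x -> c <= f x (g x)) ->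
  (c%:E <= ereal_inf [set ereal_sup [set (f x u)%:E | u in g @` A] | x in A])%E.
Proof.
move=> h; apply: le_ereal_inf_tmp => _ [x Ax <-].
apply: (@le_trans _ _ (f x (g x))%:E); first by rewrite lee_fin h.
by apply: ereal_sup_ubound; exists (g x) => //; exists x.
Qed.

Lemma filtering_cover_pair (X : Type) (N : set (set X)) x y :
  filtering_cover N -> exists2 A, N A & A x /\ A y.
Proof.
move=> [_ [cov dir]].
have [Ax NAx Axx] : (\bigcup_(A in N) A) x by rewrite cov.
have [Ay NAy Ayy] : (\bigcup_(A in N) A) y by rewrite cov.
have [A NA sub] := dir _ _ NAx NAy.
by exists A => //; split; apply: sub; [left | right].
Qed.

Theorem theorem3p5 (R : realType) (X : Type) (Y : lmodType R)
  (ip : Y -> Y -> R) (I : X -> R) (Phi : X -> Y) :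
  is_inner_product ip ->
  [set: X] !=set0 ->
  (ereal_sup [set (I x)%:E | x in [set: X]] < +oo)%E ->
  (forall y, y \in Phi @` [set: X] -> y != 0 ->
     ereal_inf [set (ip z y)%:E | z in Phi @` [set: X]] = -oo%E) ->
  forall mu : R, 0 < mu ->
  let L := fun (x : X) (lam : Y) =>
             I x + mu * (2 * ip (Phi x) lam - ip_norm ip lam ^+ 2) in
  (forall N : set (set X), filtering_cover N ->
     exists2 A, N A &
       (ereal_sup [set ereal_inf [set (L x lam)%:E | x in A] | lam in [set: Y]]
        < ereal_inf [set ereal_sup [set (L x lam)%:E | lam in Phi @` A] | x in A])%E)
  \/
  (forall x0 : X,
     (forall x : X, I x0 + mu * ip_norm ip (Phi x0) ^+ 2
                    <= I x + mu * ip_norm ip (Phi x) ^+ 2) ->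
     Phi x0 = 0).
Proof.
move=> hip _ sup_lty inf_Ny mu mu_gt0 L.
have LE x l : L x l = lagrangian ip I Phi mu x l by rewrite /L ip_norm_sqr.
have JE x : I x + mu * ip_norm ip (Phi x) ^+ 2 = penalized ip I Phi mu x.
  by rewrite ip_norm_sqr.
pose bad_min x0 := (forall x, penalized ip I Phi mu x0 <= penalized ip I Phi mu x)
                    /\ Phi x0 <> 0.
case: (pselect (exists x0, bad_min x0)) => [[x0 [x0_min /eqP Phix0_neq0]] | no_bad];
  last first.
  right => x0 x0_min; apply: contra_notP no_bad => Phix0_neq0.
  by exists x0; split=> // x; rewrite -!JE.
left.
have [S I_le] := ereal_sup_lty_ub sup_lty.
have [x1 x1_lt] := exists_lagrangian_lt mu_gt0
  (penalized ip I Phi mu x0) I_le (inf_Ny _ (mem_set (imageT Phi x0)) Phix0_neq0).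
have [c c_lt c_ge] := lagrangian_min_gap hip mu_gt0 x1_lt.
move=> N /(filtering_cover_pair x0 x1)[A NA [Ax0 Ax1]]; exists A => //.
apply: (le_lt_trans (ereal_sup_inf_le (f := L) (c := c) _)).
  by move=> l; case: (c_ge l); [exists x0 | exists x1]; rewrite // LE.
apply: (lt_le_trans _ (ereal_inf_sup_ge (f := L) (g := Phi)
  (c := penalized ip I Phi mu x0) _)).
  by rewrite lte_fin.
by move=> x _; rewrite LE lagrangian_diag.
Qed.
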